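(* Let $i\ge2$, $j\ge1$ and $k\ge1$ be integers and let $x=(10)^i0(10)^j0(10)^k$. Then $[x]_2\notin R$.
   Context: Stern's sequence $(a(n))_{n\ge0}$: $a(0)=0$, $a(1)=1$, $a(2n)=a(n)$, $a(2n+1)=a(n)+a(n+1)$; $s(n)=a(n+1)$. $R$ is the set of record-setters of $s$, i.e. indices $v\ge0$ with $s(i)<s(v)$ for all $i<v$. For a binary string $x$, $[x]_2$ is the integer it represents in base 2; $x^i$ denotes $i$-fold concatenation. *)

From mathcomp Require Import all_boot.
Set Implicit Arguments. Unset Strict Implicit. Unset Printing Implicit Defensive.

(* Stern's diatomic sequence a(0)=0, a(1)=1, a(2n)=a(n), a(2n+1)=a(n)+a(n+1),
   computed with fuel (fuel n suffices since all recursive arguments are < n). *)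
Fixpoint stern_aux (fuel n : nat) : nat :=
  match fuel with
  | 0 => 0
  | f.+1 => if n <= 1 then n
            else if odd n then stern_aux f n./2 + stern_aux f n./2.+1
            else stern_aux f n./2
  end.
Definition stern (n : nat) : nat := stern_aux n.+1 n.

Definition s (n : nat) : nat := stern n.+1.

Definition record_setter (v : nat) : Prop := forall i, i < v -> s i < s v.

(* binary strings, most significant bit first *)
Definition bin_val (x : seq bool) : nat := foldl (fun (acc : nat) (b : bool) => acc.*2 + nat_of_bool b) 0 x.

Definition srep (i : nat) (x : seq bool) : seq bool := flatten (nseq i x) : seq bool.

From Stdlib Require Import ZArith.
From mathcomp Require Import all_boot zify.

(* The word y = 100(10)^(i+j+k-1)0 has the same length as x and a smaller value
   (compare the prefixes 100 and 101), so it suffices to show s([y]_2) >= s([x]_2).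
   Reading the block 10 acts on the pair (a(n), a(n+1)) by a linear map M with
   M^2 = 3M - 1, so s([y]_2) - s([x]_2) satisfies
   g(n+2) = 3 g(n+1) - g(n) in each of the three exponents.  A sequence with
   this recurrence and 0 <= g(0) <= g(1) is nonnegative and nondecreasing, which
   reduces the claim to the eight cases with exponents i in {2,3}, j, k in {1,2}. *)

Local Notation tf := [:: true; false].

Lemma stern_aux_fuel f g n : n < f -> n < g -> stern_aux f n = stern_aux g n.
Proof.
elim: f g n => [|f IH] [|g] n //= ltnf ltng.
have := odd_double_half n.
case: ifP => // /negbT n_gt1; case: ifP => oddn /= halfn.
- by rewrite (IH g n./2) ?(IH g n./2.+1) //; lia.
- by rewrite (IH g n./2) //; lia.
Qed.

Lemma stern_auxE f n : n < f -> stern_aux f n = stern n.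
Proof. by move=> ltnf; apply: stern_aux_fuel. Qed.

Lemma stern_rec n :
  1 < n -> stern n = if odd n then stern n./2 + stern n./2.+1 else stern n./2.
Proof.
move=> n_gt1; rewrite {1}/stern /= leqNgt n_gt1 /=.
have := odd_double_half n; case: odd => /= halfn.
- by rewrite !stern_auxE //; lia.
- by rewrite stern_auxE //; lia.
Qed.

Lemma stern_double n : stern n.*2 = stern n.
Proof.
case: n => [|n] //.
by rewrite stern_rec ?odd_double ?half_double //; lia.
Qed.

Lemma stern_doubleS n : stern n.*2.+1 = stern n + stern n.+1.
Proof.
case: n => [|n] //.
by rewrite stern_rec /= ?odd_double ?uphalf_double //; lia.
Qed.

Definition stern_step (p : nat * nat) (b : bool) : nat * nat :=
  if b then (p.1 + p.2, p.2) else (p.1, p.1 + p.2).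

Definition stern_pair (w : seq bool) : nat * nat := foldl stern_step (0, 1) w.

Lemma stern_pair_bin_val w :
  stern_pair w = (stern (bin_val w), stern (bin_val w).+1).
Proof.
elim/last_ind: w => [|w b IH] //.
rewrite /stern_pair /bin_val -cats1 !foldl_cat -/(bin_val w) -/(stern_pair w) IH.
case: b => /=.
- by rewrite addn1 -doubleS stern_double stern_doubleS.
- by rewrite addn0 stern_double stern_doubleS.
Qed.

Lemma s_bin_val w : s (bin_val w) = (stern_pair w).2.
Proof. by rewrite stern_pair_bin_val. Qed.

Definition padd (p q : nat * nat) : nat * nat := (p.1 + q.1, p.2 + q.2).

Lemma foldl_stern_step_add p q w :
  foldl stern_step (padd p q) w =
  padd (foldl stern_step p w) (foldl stern_step q w).
Proof.
elim: w p q => [|b w IH] [p1 p2] [q1 q2] //=.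
by rewrite -IH /padd; case: b => /=; congr (foldl _ (_, _) _); lia.
Qed.

Lemma snd_padd p q : (padd p q).2 = p.2 + q.2.
Proof. by []. Qed.

(* The block 10 acts by the matrix M = [[1,1],[1,2]], and M^2 + 1 = 3 M. *)
Lemma foldl_rep10_rec p n :
  padd (foldl stern_step p (srep n.+2 tf)) (foldl stern_step p (srep n tf)) =
  padd (foldl stern_step p (srep n.+1 tf))
       (padd (foldl stern_step p (srep n.+1 tf)) (foldl stern_step p (srep n.+1 tf))).
Proof.
have -> : foldl stern_step p (srep n.+2 tf) =
          foldl stern_step (foldl stern_step (foldl stern_step p tf) tf) (srep n tf)
  by [].
have -> : foldl stern_step p (srep n.+1 tf) =
          foldl stern_step (foldl stern_step p tf) (srep n tf) by [].
rewrite -!foldl_stern_step_add; congr foldl.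
by case: p => p1 p2; rewrite /padd /=; congr pair; lia.
Qed.

Lemma s_rep10_rec u v n :
  s (bin_val (u ++ srep n.+2 tf ++ v)) + s (bin_val (u ++ srep n tf ++ v)) =
  3 * s (bin_val (u ++ srep n.+1 tf ++ v)).
Proof.
rewrite !s_bin_val /stern_pair !(foldl_cat _ _ u) !(foldl_cat _ _ (srep _ tf)).
move: (foldl stern_step (0, 1) u) => p.
rewrite -snd_padd -foldl_stern_step_add foldl_rep10_rec.
by rewrite !foldl_stern_step_add /=; lia.
Qed.

Lemma bin_val_cat u v : bin_val (u ++ v) = bin_val u * 2 ^ size v + bin_val v.
Proof.
rewrite /bin_val foldl_cat -/(bin_val u).
elim: v (bin_val u) => [|b v IH] m /=; first by rewrite expn0 muln1 addn0.
by rewrite IH (IH (0.*2 + b)) expnS; nia.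
Qed.

Lemma bin_val_lt w : bin_val w < 2 ^ size w.
Proof.
elim: w => [|b w IH] //.
rewrite -cat1s bin_val_cat size_cat expnD (_ : bin_val [:: b] = b) //=.
by rewrite expn1; case: b; lia.
Qed.

Lemma bin_val_cat_lt u v w :
  size v = size w -> bin_val (u ++ false :: v) < bin_val (u ++ true :: w).
Proof.
move=> szvw; rewrite !bin_val_cat -[false :: v]cat1s -[true :: w]cat1s.
rewrite !bin_val_cat (_ : bin_val [:: false] = 0) //.
rewrite (_ : bin_val [:: true] = 1) //.
by have := bin_val_lt v; rewrite /= -szvw; lia.
Qed.

Lemma size_srep n w : size (srep n w) = n * size w.
Proof. by rewrite /srep size_flatten /shape map_nseq sumn_nseq mulnC. Qed.

(* The Chebyshev recurrence with 2x = 3, e.g. of the bisected Fibonacci numbers F(2n). *)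
Definition chebyshev (g : nat -> Z) : Prop :=
  forall n, g n.+2 = (3 * g n.+1 - g n)%Z.

Lemma chebyshevB {f g} :
  chebyshev f -> chebyshev g -> chebyshev (fun n => f n - g n)%Z.
Proof. by move=> cf cg n; rewrite cf cg; lia. Qed.

Lemma chebyshev_ge0 {g} :
  chebyshev g -> (0 <= g 0%N)%Z -> (g 0%N <= g 1%N)%Z -> forall n, (0 <= g n)%Z.
Proof.
move=> cg g0_ge0 g_incr0 n.
suff : (0 <= g n <= g n.+1)%Z by lia.
by elim: n => [|n IH]; [lia | rewrite cg; lia].
Qed.

Lemma chebyshev2_ge0 {F : nat -> nat -> Z} :
  (forall m, chebyshev (F m)) -> (forall n, chebyshev (F ^~ n)) ->
  (0 <= F 0%N 0%N)%Z -> (F 0%N 0%N <= F 1%N 0%N)%Z -> (F 0%N 0%N <= F 0%N 1%N)%Z ->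
  (F 1%N 0%N + F 0%N 1%N <= F 0%N 0%N + F 1%N 1%N)%Z ->
  forall m n, (0 <= F m n)%Z.
Proof.
move=> cF1 cF2 F00 F10 F01 F11 m.
apply: chebyshev_ge0 => //; first by apply: (chebyshev_ge0 (cF2 0)).
suff : (0 <= F m 1%N - F m 0%N)%Z by lia.
by apply: (chebyshev_ge0 (chebyshevB (cF2 1) (cF2 0))); lia.
Qed.

Definition word a b c : seq bool :=
  srep a.+2 tf ++ [:: false] ++ srep b.+1 tf ++ [:: false] ++ srep c.+1 tf.

Definition rival a b c : seq bool :=
  [:: true; false; false] ++ srep a.+1 tf ++ srep b.+1 tf ++ srep c.+1 tf ++ [:: false].

Definition gap a b c : Z :=
  (Z.of_nat (s (bin_val (rival a b c))) - Z.of_nat (s (bin_val (word a b c))))%Z.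

Lemma rival_lt_word a b c : bin_val (rival a b c) < bin_val (word a b c).
Proof.
have -> : word a b c = [:: true; false] ++ true ::
    ([:: false] ++ srep a tf ++ [:: false] ++ srep b.+1 tf ++ [:: false] ++ srep c.+1 tf)
  by [].
apply: bin_val_cat_lt.
by rewrite !size_cat !size_srep /=; lia.
Qed.

Lemma chebyshev_gap_a b c : chebyshev (fun a => gap a b c).
Proof.
move=> a; rewrite /gap /word /rival.
have := s_rep10_rec [::] ([:: false] ++ srep b.+1 tf ++ [:: false] ++ srep c.+1 tf) a.+2.
have := s_rep10_rec [:: true; false; false]
          (srep b.+1 tf ++ srep c.+1 tf ++ [:: false]) a.+1.
by rewrite !cat0s; lia.
Qed.

Lemma chebyshev_gap_b a c : chebyshev (fun b => gap a b c).
Proof.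
move=> b; rewrite /gap /word /rival.
have := s_rep10_rec (srep a.+2 tf ++ [:: false]) ([:: false] ++ srep c.+1 tf) b.+1.
have := s_rep10_rec ([:: true; false; false] ++ srep a.+1 tf)
          (srep c.+1 tf ++ [:: false]) b.+1.
move: (srep a.+2 tf) (srep a.+1 tf) (srep c.+1 tf) => A2 A1 C1.
move: (srep b.+3 tf) (srep b.+2 tf) (srep b.+1 tf) => B3 B2 B1.
by rewrite -!catA; lia.
Qed.

Lemma chebyshev_gap_c a b : chebyshev (gap a b).
Proof.
move=> c; rewrite /gap /word /rival.
have := s_rep10_rec (srep a.+2 tf ++ [:: false] ++ srep b.+1 tf ++ [:: false]) [::] c.+1.
have := s_rep10_rec ([:: true; false; false] ++ srep a.+1 tf ++ srep b.+1 tf)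
          [:: false] c.+1.
move: (srep a.+2 tf) (srep a.+1 tf) (srep b.+1 tf) => A2 A1 B1.
move: (srep c.+3 tf) (srep c.+2 tf) (srep c.+1 tf) => C3 C2 C1.
by rewrite -!catA !cats0; lia.
Qed.

Lemma gap_base0 :
  [/\ gap 0 0 0 = 5%Z, gap 1 0 0 = 12%Z, gap 0 1 0 = 11%Z & gap 1 1 0 = 26%Z].
Proof. by vm_compute. Qed.

Lemma gap_base1 :
  [/\ gap 0 0 1 = 16%Z, gap 1 0 1 = 39%Z, gap 0 1 1 = 36%Z & gap 1 1 1 = 87%Z].
Proof. by vm_compute. Qed.

Lemma gap_ge0 a b c : (0 <= gap a b c)%Z.
Proof.
have [g000 g100 g010 g110] := gap_base0.
have [g001 g101 g011 g111] := gap_base1.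
have slice0 := chebyshev2_ge0 (F := fun a b => gap a b 0)
  (fun m => chebyshev_gap_b m 0) (fun n => chebyshev_gap_a n 0).
have slice1 := chebyshev2_ge0 (F := fun a b => gap a b 1 - gap a b 0)%Z
  (fun m => chebyshevB (chebyshev_gap_b m 1) (chebyshev_gap_b m 0))
  (fun n => chebyshevB (chebyshev_gap_a n 1) (chebyshev_gap_a n 0)).
have ge0 := slice0 ltac:(lia) ltac:(lia) ltac:(lia) ltac:(lia) a b.
have ge01 := slice1 ltac:(lia) ltac:(lia) ltac:(lia) ltac:(lia) a b.
have incr : (gap a b 0 <= gap a b 1)%Z by lia.
exact: chebyshev_ge0 (chebyshev_gap_c a b) ge0 incr c.
Qed.

Theorem mainTheorem17 (i j k : nat) :
  2 <= i -> 1 <= j -> 1 <= k ->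
  ~ record_setter
      (bin_val (srep i [:: true; false] ++ [:: false] ++
                srep j [:: true; false] ++ [:: false] ++
                srep k [:: true; false])).
Proof.
case: i => [|[|a]] // _; case: j => [|b] // _; case: k => [|c] // _.
move=> /(_ _ (rival_lt_word a b c)).
by have := gap_ge0 a b c; rewrite /gap /word; lia.
Qed.
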